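(* Let $\xi=(\tau_L,\delta_L,\tau_R,\delta_R)\in\Phi$. If $\lambda_L^s+|\lambda_R^s|<1$ then $U_2>V_2$, where $U=(U_1,U_2)$ and $V=(V_1,V_2)$ are the points defined below.
   Context: For $\xi=(\tau_L,\delta_L,\tau_R,\delta_R)\in\mathbb{R}^4$ define $f_\xi:\mathbb{R}^2\to\mathbb{R}^2$ by $f_\xi(x,y)=(\tau_L x+y+1,\,-\delta_L x)$ if $x\le 0$ and $f_\xi(x,y)=(\tau_R x+y+1,\,-\delta_R x)$ if $x\ge 0$. Let $\Phi=\{\xi\in\mathbb{R}^4: \tau_L>\delta_L+1,\ \delta_L>0,\ \tau_R<-(\delta_R+1),\ \delta_R>0\}$. For $\xi\in\Phi$, the matrix $\begin{bmatrix}\tau_L&1\\-\delta_L&0\end{bmatrix}$ has real eigenvalues $0<\lambda_L^s<1<\lambda_L^u$ and $\begin{bmatrix}\tau_R&1\\-\delta_R&0\end{bmatrix}$ has real eigenvalues $\lambda_R^u<-1<\lambda_R^s<0$. Let $D=\left(\frac{1}{1-\lambda_L^s},0\right)$; for $\xi\in\Phi$, $D$ lies in $x>0$ and $f_\xi(D)$ lies in $x<0$. Let $U$ be the point where the line segment from $D$ to $f_\xi(D)$ meets the $y$-axis, and let $V=\left(0,\frac{-\lambda_R^u}{\lambda_R^u-1}\right)$. *)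

From Stdlib Require Import Reals.
Open Scope R_scope.

Definition f_xi (tL dL tR dR : R) (p : R * R) : R * R :=
  let (x, y) := p in
  if Rle_dec x 0 then (tL * x + y + 1, - dL * x)
  else (tR * x + y + 1, - dR * x).

Definition in_Phi (tL dL tR dR : R) : Prop :=
  tL > dL + 1 /\ dL > 0 /\ tR < - (dR + 1) /\ dR > 0.

Definition is_eigenvalue (t d lam : R) : Prop :=
  (t - lam) * (- lam) - 1 * (- d) = 0.

Definition on_segment (a b p : R * R) : Prop :=
  exists s, 0 <= s <= 1 /\
    fst p = fst a + s * (fst b - fst a) /\
    snd p = snd a + s * (snd b - snd a).

(* U is where the segment from D to f(D) crosses the y-axis.  Since D lies in
   x > 0, f(D) = (tR d + 1, -dR d) with d = 1/(1 - lLs), and intersecting the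
   segment with x = 0 gives U_2 = -dR / ((1 - lLs)(lLs - tR)).  Writing
   tR = lRs + lRu and dR = lRs lRu (Vieta), the difference U_2 - V_2 has the
   sign of (1 - lLs - |lRs|)(lLs + |lRu|), which is positive exactly under
   the hypothesis lLs + |lRs| < 1. *)
From Stdlib Require Import Reals Lra Psatz.
Open Scope R_scope.

Lemma is_eigenvalue_trace_det (t d l1 l2 : R) :
  is_eigenvalue t d l1 -> is_eigenvalue t d l2 -> l1 <> l2 ->
  t = l1 + l2 /\ d = l1 * l2.
Proof.
  unfold is_eigenvalue; intros H1 H2 Hne.
  assert (Ht : t = l1 + l2).
  { assert (Hprod : (l1 - l2) * (l1 + l2 - t) = 0) by nra.
    destruct (Rmult_integral _ _ Hprod) as [H | H]; [lra | lra]. }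
  split; [exact Ht | subst t; nra].
Qed.

Lemma f_xi_pos (tL dL tR dR x y : R) :
  0 < x -> f_xi tL dL tR dR (x, y) = (tR * x + y + 1, - dR * x).
Proof.
  intros Hx; unfold f_xi.
  destruct (Rle_dec x 0); [lra | reflexivity].
Qed.

Lemma on_segment_yaxis (a b p : R * R) :
  on_segment a b p -> fst p = 0 -> fst a <> fst b ->
  snd p = (fst a * snd b - fst b * snd a) / (fst a - fst b).
Proof.
  intros [s [_ [Hx Hy]]] Hp0 Hab.
  assert (Hs : s = fst a / (fst a - fst b)).
  { field_simplify_eq; [lra | lra]. }
  rewrite Hy, Hs; field; lra.
Qed.

Lemma intercept_lt (l rs ru : R) :
  0 < l -> ru < -1 -> -1 < rs < 0 -> l - rs < 1 ->
  - ru / (ru - 1) < - (rs * ru) / ((1 - l) * (l - (rs + ru))).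
Proof.
  intros Hl Hru Hrs Hsum.
  apply Rminus_gt.
  (* with a = -ru > 1 and b = -rs, the difference factors as
     a (1 - l - b)(a + l) / ((1 - l)(l + a + b)(a + 1)) *)
  replace (- (rs * ru) / ((1 - l) * (l - (rs + ru))) - - ru / (ru - 1))
    with (- ru * ((1 - l + rs) * (l - ru)) / ((1 - l) * (l - rs - ru) * (1 - ru)))
    by (field; repeat split; lra).
  apply Rdiv_lt_0_compat.
  - apply Rmult_lt_0_compat; [lra | apply Rmult_lt_0_compat; lra].
  - apply Rmult_lt_0_compat; [apply Rmult_lt_0_compat | ]; lra.
Qed.

Theorem lemma3p2 (tL dL tR dR lLs lLu lRs lRu : R) (U : R * R) :
  in_Phi tL dL tR dR ->
  is_eigenvalue tL dL lLs -> is_eigenvalue tL dL lLu ->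
  0 < lLs < 1 -> 1 < lLu ->
  is_eigenvalue tR dR lRs -> is_eigenvalue tR dR lRu ->
  lRu < -1 -> -1 < lRs < 0 ->
  on_segment (1 / (1 - lLs), 0) (f_xi tL dL tR dR (1 / (1 - lLs), 0)) U ->
  fst U = 0 ->
  lLs + Rabs lRs < 1 ->
  snd U > - lRu / (lRu - 1).
Proof.
  intros _ _ _ Hl _ Hs Hu Hu1 Hs1 Hseg HU0 Hsum.
  rewrite Rabs_left in Hsum by lra.
  destruct (is_eigenvalue_trace_det _ _ _ _ Hs Hu ltac:(lra)) as [Ht Hd].
  assert (Hdpos : 0 < 1 / (1 - lLs)) by (apply Rdiv_lt_0_compat; lra).
  rewrite f_xi_pos in Hseg by exact Hdpos.
  assert (HU : snd U = - dR / ((1 - lLs) * (lLs - tR))).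
  { rewrite (on_segment_yaxis _ _ _ Hseg HU0); simpl.
    - field; subst tR; repeat split; lra.
    - assert (Hd1 : 1 < 1 / (1 - lLs)).
      { apply (Rmult_lt_reg_r (1 - lLs)); [lra | field_simplify; lra]. }
      subst tR; nra. }
  rewrite HU, Hd, Ht.
  apply intercept_lt; lra.
Qed.
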